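(* Let $\Omega\subset\mathbb{C}^n$ be a bounded domain, let $\mathcal R$ and $\mathcal R'$ be quasi-free Hilbert modules of rank $m$, $1\le m<\infty$, over $A(\Omega)$ with generating sets $\{f_i\}_{i=1}^m$ and $\{g_i\}_{i=1}^m$, and let $\delta=\delta(\mathcal R,\mathcal R')$. For each $z\in\Omega$, the map $\delta\otimes_{A(\Omega)}1_z:\mathcal R\otimes_{A(\Omega)}\mathbb C_z\to\mathcal R'\otimes_{A(\Omega)}\mathbb C_z$, $h\otimes 1_z\mapsto \delta h\otimes1_z$ ($h$ in the domain of $\delta$), is well-defined. Moreover, $\delta\otimes_{A(\Omega)}1_z$ is an invertible operator between these $m$-dimensional Hilbert spaces.
   Context: $A(\Omega)$ is the closure, in the supremum norm on $\Omega$, of the set of functions holomorphic on some neighbourhood of $\overline\Omega$; $\ell^2_m$ is the $m$-dimensional Hilbert space. A quasi-free Hilbert module of rank $m$ over $A(\Omega)$ is a Hilbert space $\mathcal R$ obtained as the completion of $A(\Omega)\otimes\ell^2_m$ (regarded as $\ell^2_m$-valued holomorphic functions on $\Omega$) with respect to an inner product such that: (1) for each $z\in\Omega$ evaluation at $z$ is bounded, with norm locally uniformly bounded in $z$; (2) $\|\varphi F\|_{\mathcal R}\le\|\varphi\|_{A(\Omega)}\|F\|_{\mathcal R}$; (3) if $(F_i)$ is Cauchy in $\mathcal R$-norm, then $F_i(z)\to0$ for all $z$ iff $\|F_i\|_{\mathcal R}\to0$. $A(\Omega)$ acts by multiplication. For $z\in\Omega$, $\mathbb C_z$ is $\mathbb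 C$ with action $\varphi\cdot\lambda=\varphi(z)\lambda$; the localization $\mathcal R\otimes_{A(\Omega)}\mathbb C_z$ is identified with $\mathcal R/\mathcal R_z$, where $\mathcal R_z$ is the closure of $A(\Omega)_z\mathcal R$, $A(\Omega)_z=\{\varphi\in A(\Omega):\varphi(z)=0\}$; $h\otimes1_z$ is the class of $h$. A generating set is $\{f_1,\dots,f_m\}\subset\mathcal R$ whose $A(\Omega)$-multiples span a dense subspace and with $\{f_i\otimes1_z\}$ a basis of $\mathcal R\otimes_{A(\Omega)}\mathbb C_z$ for each $z$. $\delta(\mathcal R,\mathcal R')$ is the closed, densely defined, one-to-one module transformation with dense range whose graph is the closure in $\mathcal R\oplus\mathcal R'$ of the span of $\{\varphi f_i\oplus\varphi g_i:\varphi\in A(\Omega),1\le i\le m\}$. *)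

(* Complex numbers are R[i] for a
   realType R (mathcomp-real-closed `complex`); C^n is 'rV[C]_n with its
   normed-module topology; holomorphy = complex Frechet differentiability. *)
From mathcomp Require Import all_boot all_algebra.
From mathcomp Require Import all_classical all_reals all_analysis.
From mathcomp Require Import complex.
Import GRing.Theory Num.Theory numFieldTopology.Exports numFieldNormedType.Exports.
Set Implicit Arguments.
Unset Strict Implicit.
Local Open Scope ring_scope.
Local Open Scope classical_set_scope.

Definition CC (R : realType) : numClosedFieldType := R[i].

Section QuasiFree.
Variables (R : realType) (n m : nat).
Local Notation C := (CC R).
Local Notation V := 'rV[C]_n.
Local Notation W := 'rV[C]_m.
Local Notation Fn := (V -> W).

Definition fsub (f g : Fn) : Fn := fun z => f z - g z.
Definition flin (a : C) (f g : Fn) : Fn := fun z => a *: f z + g z.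
Definition fmul (phi : V -> C) (F : Fn) : Fn := fun z => phi z *: F z.
Definition fsum {k : nat} (F : 'I_k -> Fn) : Fn := fun z => \sum_(i < k) F i z.

Definition bounded_domain (Om : set V) :=
  Om !=set0 /\ open Om /\ connected Om /\ bounded_set Om.

Definition holomorphic_on (U : set V) (f : V -> C^o) :=
  forall z, U z -> differentiable f z.

Definition sup_bound (Om : set V) (phi : V -> C) (c : C) :=
  forall z, Om z -> `|phi z| <= c.

(* A(Om): sup-norm (on Om) closure of the functions holomorphic on a
   neighbourhood of the closure of Om (only values on Om matter) *)
Definition A_Omega (Om : set V) : set (V -> C) :=
  [set phi | forall e : C, 0 < e -> exists (U : set V) (psi : V -> C^o),
      [/\ open U, closure Om `<=` U, holomorphic_on U psi &
          sup_bound Om (fun z => phi z - psi z) e]].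

(* A(Om) (x) l^2_m : l^2_m-valued functions with coordinates in A(Om) *)
Definition A_tensor (Om : set V) : set Fn :=
  [set F | forall j : 'I_m, A_Omega Om (fun z => F z ord0 j)].

Definition ext0 (Om : set V) (F : Fn) : Fn :=
  fun z => if `[< Om z >] then F z else 0.

Definition is_subspace (S : set Fn) :=
  S (fun=> 0) /\ forall a f g, S f -> S g -> S (flin a f g).

Definition is_inner_product (S : set Fn) (ip : Fn -> Fn -> C) :=
  [/\ (forall a f g h, S f -> S g -> S h ->
         ip (flin a f g) h = a * ip f h + ip g h),
      (forall f g, S f -> S g -> ip g f = (ip f g)^*),
      (forall f, S f -> 0 <= ip f f) &
      (forall f, S f -> ip f f = 0 -> f = fun=> 0)].

Definition hnorm (ip : Fn -> Fn -> C) (f : Fn) : C := sqrtC (ip f f).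

Definition hcauchy (ip : Fn -> Fn -> C) (u : nat -> Fn) :=
  forall e : C, 0 < e -> exists N, forall p q, (N <= p)%N -> (N <= q)%N ->
    hnorm ip (fsub (u p) (u q)) < e.

Definition hconv (ip : Fn -> Fn -> C) (u : nat -> Fn) (f : Fn) :=
  forall e : C, 0 < e -> exists N, forall p, (N <= p)%N ->
    hnorm ip (fsub (u p) f) < e.

Definition hcomplete (S : set Fn) (ip : Fn -> Fn -> C) :=
  forall u, (forall k, S (u k)) -> hcauchy ip u ->
    exists f, S f /\ hconv ip u f.

Definition hilbert_space (S : set Fn) (ip : Fn -> Fn -> C) :=
  [/\ is_subspace S, is_inner_product S ip & hcomplete S ip].

Definition hclosure (S : set Fn) (ip : Fn -> Fn -> C) (T : set Fn) : set Fn :=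
  [set f | S f /\ forall e : C, 0 < e -> exists g, T g /\ hnorm ip (fsub f g) < e].

(* quasi-free Hilbert module of rank m over A(Om), realized as the Hilbert
   space of l^2_m-valued functions on Om obtained by completing
   A(Om) (x) l^2_m (functions vanish off Om by convention) *)
Definition quasi_free (Om : set V) (S : set Fn) (ip : Fn -> Fn -> C) :=
  hilbert_space S ip /\
      (forall f z, S f -> ~ Om z -> f z = 0) /\
      (forall F, A_tensor Om F -> S (ext0 Om F)) /\
      (forall f, S f -> hclosure S ip [set ext0 Om F | F in A_tensor Om] f) /\
      (forall z, Om z -> exists r M : C, 0 < r /\
         forall w f, Om w -> `|w - z| < r -> S f -> `|f w| <= M * hnorm ip f) /\
      (forall phi F, A_Omega Om phi -> S F ->
         S (fmul phi F) /\
         forall c, sup_bound Om phi c -> hnorm ip (fmul phi F) <= c * hnorm ip F) /\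
      (forall u, (forall k, S (u k)) -> hcauchy ip u ->
         ((forall z, Om z -> (fun k => u k z) @ \oo --> (0 : W)) <->
          (fun k => hnorm ip (u k)) @ \oo --> (0 : C))).

(* the closed submodule R_z = closure of A(Om)_z R *)
Definition AzR (Om : set V) (S : set Fn) (z : V) : set Fn :=
  [set f | exists k (phi : 'I_k -> V -> C) (F : 'I_k -> Fn),
      (forall i, [/\ A_Omega Om (phi i), phi i z = 0 & S (F i)]) /\
      f = fsum (fun i => fmul (phi i) (F i))].

Definition Rz (Om : set V) (S : set Fn) (ip : Fn -> Fn -> C) (z : V) : set Fn :=
  hclosure S ip (AzR Om S z).

Definition Aspan (Om : set V) (fs : 'I_m -> Fn) : set Fn :=
  [set f | exists k (phi : 'I_k -> V -> C) (idx : 'I_k -> 'I_m),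
      (forall j, A_Omega Om (phi j)) /\ f = fsum (fun j => fmul (phi j) (fs (idx j)))].

Definition generating_set (Om : set V) (S : set Fn) (ip : Fn -> Fn -> C)
    (fs : 'I_m -> Fn) :=
  [/\ (forall i, S (fs i)),
      (forall f, S f -> hclosure S ip (Aspan Om fs) f) &
      (forall z, Om z ->
        (forall c : 'I_m -> C,
           Rz Om S ip z (fsum (fun i => fmul (fun=> c i) (fs i))) ->
           forall i, c i = 0) /\
        (forall f, S f -> exists c : 'I_m -> C,
           Rz Om S ip z (fsub f (fsum (fun i => fmul (fun=> c i) (fs i))))))].

(* graph of delta(R, R'): closure in R (+) R' of the span of
   {phi f_i (+) phi g_i} *)
Definition delta_graph (Om : set V) (S : set Fn) (ip : Fn -> Fn -> C)
    (S' : set Fn) (ip' : Fn -> Fn -> C) (fs gs : 'I_m -> Fn) (h k : Fn) :=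
  S h /\ S' k /\ forall e : C, 0 < e ->
    exists K (c : 'I_K -> C) (phi : 'I_K -> V -> C) (idx : 'I_K -> 'I_m),
      (forall j, A_Omega Om (phi j)) /\
      let a := fsum (fun j => fmul (fun w => c j * phi j w) (fs (idx j))) in
      let b := fsum (fun j => fmul (fun w => c j * phi j w) (gs (idx j))) in
      sqrtC (ip (fsub h a) (fsub h a) + ip' (fsub k b) (fsub k b)) < e.

End QuasiFree.

(* Evaluation at z is bounded, so every element of R_z vanishes at z.  The
   constant vectors lie in R and are combinations of the f_i modulo R_z, so
   the values f_i(z) form an invertible matrix F(z); hence R_z is exactly the
   kernel of evaluation at z and h (x) 1_z |-> h(z) identifies R (x) C_z with
   l^2_m.  Approximating a point (h, k) of the graph of delta by
   A(Om)-combinations of the pairs (f_i, g_i) and using bounded evaluation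
   once more gives k(z) = h(z) F(z)^-1 G(z), so that under these
   identifications delta (x) 1_z is the invertible matrix F(z)^-1 G(z). *)
From mathcomp Require Import all_boot all_algebra.
From mathcomp Require Import all_classical all_reals all_analysis.
From mathcomp Require Import complex.
Import order.Order.TTheory GRing.Theory Num.Theory.
Import numFieldTopology.Exports numFieldNormedType.Exports.
Local Open Scope ring_scope.
Local Open Scope classical_set_scope.

Lemma eq0_le_scaled {K : numFieldType} {A y : K} : 0 <= A -> 0 <= y ->
  (forall e, 0 < e -> y <= A * e) -> y = 0.
Proof.
move=> A_ge0 y_ge0 yle; apply/eqP; rewrite eq_le y_ge0 andbT.
apply/ler_addgt0Pr => e e_gt0; rewrite add0r.
have A1_gt0 : 0 < A + 1 by rewrite ltr_wpDl.
apply: le_trans (yle _ (divr_gt0 e_gt0 A1_gt0)) _.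
by rewrite mulrCA ger_pMr // ler_pdivrMr // mul1r lerDl.
Qed.

Section RowNorm.
Context {K : numDomainType} {m : nat}.

Lemma ler_entry_norm (x : 'rV[K]_m) i : `|x 0 i| <= `|x|.
Proof.
change (`|x 0 i| <= mx_norm x); rewrite mx_normE -[X in X <= _]nngE num_le.
exact: (le_bigmax _ _ (0, i)).
Qed.

Lemma ler_norm_mulmx (x : 'rV[K]_m) (X : 'M[K]_m) :
  `|x *m X| <= (\sum_i `|row i X|) * `|x|.
Proof.
rewrite mulmx_sum_row mulr_suml; apply: le_trans (ler_norm_sum _ _ _) _.
by apply: ler_sum => i _; rewrite mx_normZ mulrC ler_wpM2l // ler_entry_norm.
Qed.

End RowNorm.

Section QuasiFreeModules.
Local Set Implicit Arguments.
Local Unset Strict Implicit.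
Variables (R : realType) (n m : nat).
Local Notation C := (CC R).
Local Notation V := 'rV[C]_n.
Local Notation W := 'rV[C]_m.
Local Notation Fn := (V -> W).

Lemma fsubrr (f : Fn) : fsub f f = fun=> 0.
Proof. by apply: funext => w; rewrite /fsub subrr. Qed.

Section Subspace.
Variable S : set Fn.
Hypothesis S_subspace : is_subspace S.

Lemma subspace0 : S (fun=> 0).
Proof. by case: S_subspace. Qed.

Lemma subspace_scale (c : C) f : S f -> S (fun w => c *: f w).
Proof.
move=> Sf; have -> : (fun w => c *: f w) = flin c f (fun=> 0).
  by apply: funext => w; rewrite /flin addr0.
by case: S_subspace => _; apply; last exact: subspace0.
Qed.

Lemma subspace_fsub f g : S f -> S g -> S (fsub f g).
Proof.
move=> Sf Sg; have -> : fsub f g = flin (-1) g f.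
  by apply: funext => w; rewrite /fsub /flin scaleN1r addrC.
by case: S_subspace => _; apply.
Qed.

Lemma subspace_fsum k (F : 'I_k -> Fn) : (forall i, S (F i)) -> S (fsum F).
Proof.
elim: k F => [|k IHk] F SF.
  have -> : fsum F = fun=> 0 by apply: funext => w; rewrite /fsum big_ord0.
  exact: subspace0.
have -> : fsum F = flin 1 (fsum (fun i : 'I_k => F (widen_ord (leqnSn k) i)))
                         (F ord_max).
  by apply: funext => w; rewrite /fsum /flin big_ord_recr scale1r.
by case: S_subspace => _; apply => //; apply: IHk.
Qed.

End Subspace.

Lemma inner_product00 (S : set Fn) ip : is_subspace S -> is_inner_product S ip ->
  ip (fun=> 0) (fun=> 0) = 0.
Proof.
move=> /subspace0 S0 [ipD _ _ _].
have := ipD (-1) _ _ _ S0 S0 S0.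
have -> : flin (-1) (fun=> 0 : W) (fun=> 0) = (fun _ : V => 0 : W).
  by apply: funext => w; rewrite /flin scaler0 addr0.
by rewrite mulN1r addNr.
Qed.

Lemma hnorm_ge0 (S : set Fn) ip f : is_inner_product S ip -> S f ->
  0 <= hnorm ip f.
Proof. by case=> _ _ ip_ge0 _ Sf; rewrite /hnorm sqrtC_ge0 ip_ge0. Qed.

Lemma A_Omega_cst (Om : set V) (c : C) : A_Omega Om (fun=> c).
Proof.
move=> e e_gt0; exists setT, (fun=> c : C^o); split.
- exact: openT.
- by [].
- by move=> w _; apply: differentiable_cst.
- by move=> w _; rewrite subrr normr0 ltW.
Qed.

Definition gen_mx (fs : 'I_m -> Fn) (z : V) : 'M[C]_m := \matrix_i fs i z.

Lemma sum_scale_gen_mx (fs : 'I_m -> Fn) z (c : 'I_m -> C) :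
  \sum_i c i *: fs i z = \row_i c i *m gen_mx fs z.
Proof. by rewrite mulmx_sum_row; apply: eq_bigr => i _; rewrite rowK mxE. Qed.

Section QuasiFree.
Variables (Om : set V) (S : set Fn) (ip : Fn -> Fn -> C).
Hypothesis QF : quasi_free Om S ip.

Lemma qf_subspace : is_subspace S.
Proof. by case: QF => -[]. Qed.

Lemma qf_inner_product : is_inner_product S ip.
Proof. by case: QF => -[]. Qed.

Lemma qf_ext0_cst (v : W) : S (ext0 Om (fun=> v)).
Proof. by case: QF => _ [_ [ext0S _]]; apply: ext0S => j; apply: A_Omega_cst. Qed.

Lemma qf_fmul phi F : A_Omega Om phi -> S F -> S (fmul phi F).
Proof. by case: QF => _ [_ [_ [_ [_ [fmulS _]]]]] Aphi SF; case: (fmulS phi F). Qed.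

Lemma qf_fmul_scaled (c : C) phi F : A_Omega Om phi -> S F ->
  S (fmul (fun w => c * phi w) F).
Proof.
move=> Aphi SF; have -> : fmul (fun w => c * phi w) F = fun w => c *: fmul phi F w.
  by apply: funext => w; rewrite /fmul scalerA.
exact/(subspace_scale qf_subspace)/qf_fmul.
Qed.

Variable z : V.
Hypothesis Oz : Om z.

Lemma qf_eval_bound :
  exists2 M : C, 0 <= M & forall f, S f -> `|f z| <= M * hnorm ip f.
Proof.
case: QF => _ [_ [_ [_ [eval_bnd _]]]].
have [r [M [r_gt0 HM]]] := eval_bnd z Oz.
exists `|M| => // f Sf.
have fzM : `|f z| <= M * hnorm ip f by apply: HM; rewrite ?subrr ?normr0.
have M_ge0 : 0 <= M * hnorm ip f := le_trans (normr_ge0 _) fzM.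
by rewrite -(ger0_norm M_ge0) normrM (ger0_norm (hnorm_ge0 qf_inner_product Sf)) in fzM.
Qed.

Lemma Rz_eval0 f : Rz Om S ip z f -> f z = 0.
Proof.
move=> [Sf approx]; have [M M_ge0 HM] := qf_eval_bound.
apply: normr0_eq0; apply: (eq0_le_scaled M_ge0 (normr_ge0 _)) => e e_gt0.
have [g [[k [phi [F [HF g_def]]]] close]] := approx e e_gt0.
have Sg : S g.
  rewrite g_def; apply: (subspace_fsum qf_subspace) => i.
  by case: (HF i) => Aphi _ SF; apply: qf_fmul.
have gz0 : g z = 0.
  by rewrite g_def /fsum big1 // => i _; case: (HF i) => _ phiz _; rewrite /fmul phiz scale0r.
have -> : `|f z| = `|fsub f g z| by rewrite /fsub gz0 subr0.
apply: le_trans (HM _ (subspace_fsub qf_subspace Sf Sg)) _.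
by rewrite ler_wpM2l // ltW.
Qed.

Section Generators.
Variable fs : 'I_m -> Fn.
Hypothesis GS : generating_set Om S ip fs.

Lemma gen_eval_span f : S f -> exists c : 'I_m -> C, f z = \row_i c i *m gen_mx fs z.
Proof.
case: GS => _ _ /(_ z Oz) [_ /[apply] [[c /Rz_eval0]]].
rewrite /fsub /fsum /fmul => /eqP; rewrite subr_eq0 => /eqP fz.
by exists c; rewrite fz sum_scale_gen_mx.
Qed.

Lemma gen_mx_unit : gen_mx fs z \in unitmx.
Proof.
have span j : exists c : 'I_m -> C, delta_mx 0 j = \row_i c i *m gen_mx fs z.
  by have := gen_eval_span (qf_ext0_cst (delta_mx 0 j)); rewrite /ext0 asboolT.
have [c Hc] := choice span.
have inv : (\matrix_j \row_i c j i) *m gen_mx fs z = 1%:M.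
  by apply/row_matrixP => j; rewrite row_mul rowK row1 -Hc.
by case: (mulmx1_unit inv).
Qed.

Lemma Rz_of_eval0 f : S f -> f z = 0 -> Rz Om S ip z f.
Proof.
move=> Sf fz0; case: GS => _ _ /(_ z Oz) [_ /(_ f Sf) [c Rfc]].
have c0 : \row_i c i = 0.
  have := Rz_eval0 Rfc; rewrite /fsub /fsum /fmul fz0 sub0r => /eqP.
  rewrite oppr_eq0 sum_scale_gen_mx => /eqP cF0.
  by rewrite -(mulmxK gen_mx_unit (\row_i c i)) cF0 mul0mx.
suff -> : f = fsub f (fsum (fun i => fmul (fun=> c i) (fs i))) by [].
apply: funext => w; rewrite /fsub /fsum /fmul big1 ?subr0 // => i _.
by have /rowP/(_ i) := c0; rewrite !mxE => ->; rewrite scale0r.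
Qed.

End Generators.
End QuasiFree.

Section Graph.
Variables (Om : set V) (S S' : set Fn) (ip ip' : Fn -> Fn -> C).
Variables (fs gs : 'I_m -> Fn).
Hypotheses (QF : quasi_free Om S ip) (QF' : quasi_free Om S' ip').
Hypotheses (GS : generating_set Om S ip fs) (GS' : generating_set Om S' ip' gs).
Local Notation graph := (delta_graph Om S ip S' ip' fs gs).

Lemma delta_graph_cst (c : 'I_m -> C) :
  graph (fsum (fun i => fmul (fun=> c i) (fs i)))
        (fsum (fun i => fmul (fun=> c i) (gs i))).
Proof.
case: GS GS' => [Sfs _ _] [Sgs _ _].
split; [|split].
- apply: (subspace_fsum (qf_subspace QF)) => i.
  exact: (qf_fmul QF (A_Omega_cst Om (c i)) (Sfs i)).
- apply: (subspace_fsum (qf_subspace QF')) => i.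
  exact: (qf_fmul QF' (A_Omega_cst Om (c i)) (Sgs i)).
- move=> e e_gt0; exists m, c, (fun _ _ => 1), id; split => [j|/=].
    exact: A_Omega_cst.
  have scaled_const (hs : 'I_m -> Fn) : fsum (fun i => fmul (fun=> c i * 1) (hs i))
      = fsum (fun i => fmul (fun=> c i) (hs i)).
    by apply: funext => w; apply: eq_bigr => i _; rewrite mulr1.
  rewrite !scaled_const !fsubrr.
  rewrite (inner_product00 (qf_subspace QF) (qf_inner_product QF)).
  by rewrite (inner_product00 (qf_subspace QF') (qf_inner_product QF')) addr0 sqrtC0.
Qed.

Variables (z : V) (X : 'M[C]_m).
Hypothesis gen_transfer : forall i, fs i z *m X = gs i z.

Lemma delta_graph_approx h k e : graph h k -> 0 < e ->
  exists a b, [/\ S a, S' b, hnorm ip (fsub h a) <= e,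
                  hnorm ip' (fsub k b) <= e & b z = a z *m X].
Proof.
move=> [Sh [Sk approx]] /approx [K [c [phi [idx [Aphi /=]]]]].
set a := fsum _; set b := fsum _ => close.
case: GS GS' => [Sfs _ _] [Sgs _ _].
have Sa : S a.
  by apply: (subspace_fsum (qf_subspace QF)) => j; apply: (qf_fmul_scaled QF).
have Sb : S' b.
  by apply: (subspace_fsum (qf_subspace QF')) => j; apply: (qf_fmul_scaled QF').
have [_ _ ip_ge0 _] := qf_inner_product QF.
have [_ _ ip'_ge0 _] := qf_inner_product QF'.
have ha_ge0 := ip_ge0 _ (subspace_fsub (qf_subspace QF) Sh Sa).
have kb_ge0 := ip'_ge0 _ (subspace_fsub (qf_subspace QF') Sk Sb).
exists a, b; split => //.
- apply: le_trans (ltW close); rewrite /hnorm ler_sqrtC ?nnegrE ?addr_ge0 //.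
  by rewrite lerDl.
- apply: le_trans (ltW close); rewrite /hnorm ler_sqrtC ?nnegrE ?addr_ge0 //.
  by rewrite lerDr.
- rewrite /a /b /fsum /fmul mulmx_suml; apply: eq_bigr => j _.
  by rewrite -scalemxAl gen_transfer.
Qed.

Hypothesis Oz : Om z.

Lemma delta_graph_eval h k : graph h k -> k z = h z *m X.
Proof.
move=> G; have [Sh [Sk _]] := G.
have [M M_ge0 HM] := qf_eval_bound QF Oz.
have [M' M'_ge0 HM'] := qf_eval_bound QF' Oz.
have NX_ge0 : 0 <= \sum_i `|row i X| by apply: sumr_ge0 => i _.
apply/eqP; rewrite -subr_eq0; apply/eqP/normr0_eq0.
apply: (eq0_le_scaled (A := M' + (\sum_i `|row i X|) * M)) => //.
  by rewrite addr_ge0 // mulr_ge0.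
move=> e e_gt0; have [a [b [Sa Sb ha kb ab]]] := delta_graph_approx G e_gt0.
have -> : k z - h z *m X = fsub k b z - fsub h a z *m X.
  by rewrite /fsub mulmxBl ab opprB addrA subrK.
apply: le_trans (ler_normB _ _) _; rewrite mulrDl -mulrA; apply: lerD.
  apply: le_trans (HM' _ (subspace_fsub (qf_subspace QF') Sk Sb)) _.
  exact: ler_wpM2l.
apply: le_trans (ler_norm_mulmx _ _) _; apply: ler_wpM2l => //.
apply: le_trans (HM _ (subspace_fsub (qf_subspace QF) Sh Sa)) _.
exact: ler_wpM2l.
Qed.

End Graph.
End QuasiFreeModules.

Theorem lemma2 (R : realType) (n m : nat) (Om : set 'rV[CC R]_n)
    (S S' : set ('rV[CC R]_n -> 'rV[CC R]_m))
    (ip ip' : ('rV[CC R]_n -> 'rV[CC R]_m) -> ('rV[CC R]_n -> 'rV[CC R]_m) -> CC R)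
    (fs gs : 'I_m -> 'rV[CC R]_n -> 'rV[CC R]_m) :
  bounded_domain Om -> (1 <= m)%N ->
  quasi_free Om S ip -> quasi_free Om S' ip' ->
  generating_set Om S ip fs -> generating_set Om S' ip' gs ->
  forall z, Om z ->
  [/\ (* well-defined: h (x) 1_z |-> delta h (x) 1_z *)
      (forall h k, delta_graph Om S ip S' ip' fs gs h k ->
         Rz Om S ip z h -> Rz Om S' ip' z k),
      (* defined on all of R (x) C_z *)
      (forall f, S f -> exists h k, delta_graph Om S ip S' ip' fs gs h k /\
         Rz Om S ip z (fsub f h)),
      (* injective *)
      (forall h k, delta_graph Om S ip S' ip' fs gs h k ->
         Rz Om S' ip' z k -> Rz Om S ip z h) &
      (* surjective *)
      (forall k', S' k' -> exists h k, delta_graph Om S ip S' ip' fs gs h k /\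
         Rz Om S' ip' z (fsub k' k))].
Proof.
move=> _ _ QF QF' GS GS' z Oz.
have FU := gen_mx_unit QF Oz GS; have GU := gen_mx_unit QF' Oz GS'.
set X := invmx (gen_mx fs z) *m gen_mx gs z.
have XU : X \in unitmx by rewrite unitmx_mul unitmx_inv FU GU.
have transfer i : fs i z *m X = gs i z.
  by rewrite -[fs i z](rowK (fun i => fs i z)) -row_mul mulmxA mulmxV // mul1mx rowK.
have graph_eval := delta_graph_eval QF QF' GS GS' transfer Oz.
split.
- move=> h k G /(Rz_eval0 QF Oz) hz0; have [_ [Sk _]] := G.
  by apply: (Rz_of_eval0 QF' Oz GS' Sk); rewrite (graph_eval _ _ G) hz0 mul0mx.
- move=> f Sf; have [_ _ /(_ z Oz) [_ /(_ f Sf) [c Rfc]]] := GS.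
  by do 2!eexists; split; [apply: (delta_graph_cst QF QF' GS GS' c) | exact: Rfc].
- move=> h k G /(Rz_eval0 QF' Oz) kz0; have [Sh _] := G.
  apply: (Rz_of_eval0 QF Oz GS Sh).
  by rewrite -(mulmxK XU (h z)) -(graph_eval _ _ G) kz0 mul0mx.
- move=> f Sf; have [_ _ /(_ z Oz) [_ /(_ f Sf) [c Rfc]]] := GS'.
  by do 2!eexists; split; [apply: (delta_graph_cst QF QF' GS GS' c) | exact: Rfc].
Qed.
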